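(* Let $f:\mathbb{R}^n\to\mathbb{R}$ be differentiable with $L$-Lipschitz gradient $\nabla f$, i.e. $\|\nabla f(x)-\nabla f(y)\|_2\le L\|x-y\|_2$ for all $x,y$. Suppose the estimators $G^t$ are independent versions of an unbiased estimator $G$ of $\nabla f$, and let $x^t$ be the iterates of stochastic Markov gradient descent (SMGD) with lattice resolution $\alpha>0$ and normalizer $\eta>0$. Let $\mathcal{E}^t$ denote the event that $\|G^t(x^t)\|_\infty\le\eta$. Then $$\mathbb{E}\left[f(x^{t+1})\,\middle|\,x^t,\mathcal{E}^t\right]\le f(x^t)+\frac{L\alpha^2}{2\eta}\,\mathbb{E}\left[\|G(x^t)\|_1\,\middle|\,x^t,\mathcal{E}^t\right]-\frac{\alpha}{\eta}\|\nabla f(x^t)\|_2^2 .$$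
   Context: SMGD: Let $f:\mathbb{R}^n\to\mathbb{R}$ be differentiable, $\alpha>0$, $\eta>0$, and $x^0\in\alpha\mathbb{Z}^n$. At step $t$ a random vector $G^t(x^t)\in\mathbb{R}^n$ (an estimate of $\nabla f(x^t)$) is drawn; then for each coordinate $i\in\{1,\dots,n\}$, conditionally on $G^t$ and $x^t$, $\Delta^t_i\in\{0,1\}$ is a Bernoulli random variable with $\mathbb{P}[\Delta^t_i=1\mid G^t,x^t]=\min(|G^t(x^t)_i|/\eta,1)$, and one sets $x^{t+1}_i=x^t_i-\alpha\,\mathrm{sgn}(G^t(x^t)_i)\,\Delta^t_i$. A random function $G:\mathbb{R}^n\to\mathbb{R}^n$ is an unbiased estimator of $\nabla f$ if $\mathbb{E}[G(x)]=\nabla f(x)$ for every $x$. Standing assumptions: $\{G^t\}$ are independent identically distributed copies of $G$; each $G^t$ is independent of $x^t$, so $\mathbb{E}[G^t(x^t)\mid x^t]=\nabla f(x^t)$; and moreover $\mathbb{E}[G^t(x^t)\mid x^t,\mathcal{E}^t]=\nabla f(x^t)$, where $\mathcal{E}^t$ is the event $\|G^t(x^t)\|_\infty\le\eta$. Subscript $i$ denotes the $i$-th coordinate. *)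

From HB Require Import structures.
From mathcomp Require Import all_boot all_order all_algebra.
From mathcomp Require Import all_classical all_reals all_analysis.
Set Implicit Arguments. Unset Strict Implicit. Unset Printing Implicit Defensive.
Import Order.TTheory GRing.Theory Num.Theory.
Import numFieldNormedType.Exports.
Local Open Scope classical_set_scope.
Local Open Scope ring_scope.

Section SMGDDefs.
Variable R : realType.
Variable n : nat.

Definition basis_vec (i : 'I_n) : 'rV[R]_n := delta_mx 0 i.

Definition grad (f : 'rV[R]_n -> R) (x : 'rV[R]_n) : 'rV[R]_n :=
  \row_i ('D_(basis_vec i) f x).

Definition norm2sq (v : 'rV[R]_n) : R := \sum_i (v 0 i) ^+ 2.
Definition norm2 (v : 'rV[R]_n) : R := Num.sqrt (norm2sq v).
Definition norm1 (v : 'rV[R]_n) : R := \sum_i `|v 0 i|.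

Definition lipschitz_grad (f : 'rV[R]_n -> R) (L : R) : Prop :=
  forall x y, norm2 (grad f x - grad f y) <= L * norm2 (x - y).

Definition in_lattice (alpha : R) (x : 'rV[R]_n) : Prop :=
  forall i, exists k : int, x 0 i = alpha * k%:~R.

Variables (d : measure_display) (T : measurableType d).

Definition rvec_measurable (X : T -> 'rV[R]_n) : Prop :=
  forall i, measurable_fun setT (fun w => X w 0 i).

Definition gen2 (X Y : T -> 'rV[R]_n) : set (set T) :=
  [set A | exists i : 'I_n, exists B : set R, measurable B /\
     (A = (fun w => X w 0 i) @^-1` B \/ A = (fun w => Y w 0 i) @^-1` B)].

Definition sigma2 (X Y : T -> 'rV[R]_n) : set (set T) := <<s gen2 X Y >>.

Definition condE (P : probability T R) (A : set T) (Z : T -> R) : R :=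
  Rintegral P A Z / fine (P A).

(* one SMGD step: x^{t+1}_i = x^t_i - alpha sgn(G_i) Delta_i *)
Definition smgd_step (alpha : R) (x g : 'rV[R]_n) (D : 'I_n -> bool) : 'rV[R]_n :=
  \row_i (x 0 i - alpha * Num.sg (g 0 i) * (D i)%:R).

Definition Eevent (eta : R) (G : T -> 'rV[R]_n) : set T :=
  [set w | forall i, `|G w 0 i| <= eta].

End SMGDDefs.

(* On the event A = {x^t = x} /\ E^t the SMGD step is x - alpha v with
   v_i = sgn(G_i) Delta_i in {-1, 0, 1}.  Since grad f is L-Lipschitz, the descent
   lemma gives f (x - alpha v) <= f x - alpha <grad f x, v> + L alpha^2 |v|^2 / 2.
   Given (x^t, G^t), Delta_i is Bernoulli with parameter |G_i| / eta on A, because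
   |G_i| <= eta there; hence E[v_i | A] = E[G_i | A] / eta = (grad f x)_i / eta and
   E[v_i^2 | A] = E[|G_i| | A] / eta.  Averaging the descent inequality over A
   gives the bound. *)

From HB Require Import structures.
From mathcomp Require Import all_boot all_order all_algebra.
From mathcomp Require Import all_classical all_reals all_analysis.
From mathcomp Require Import ring lra measurable_realfun.
Import Order.TTheory GRing.Theory Num.Theory.
Import numFieldNormedType.Exports.
Local Open Scope classical_set_scope.
Local Open Scope ring_scope.

Section LipschitzGradient.
Context {R : realType} {n : nat}.
Implicit Types (u v x h : 'rV[R]_n) (f : 'rV[R]_n -> R).

Lemma norm2sq_ge0 v : 0 <= norm2sq v.
Proof. by apply: sumr_ge0 => i _; exact: sqr_ge0. Qed.

Lemma sqr_norm2 v : norm2 v ^+ 2 = norm2sq v.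
Proof. by rewrite sqr_sqrtr ?norm2sq_ge0. Qed.

Lemma norm2sqZ a v : norm2sq (a *: v) = a ^+ 2 * norm2sq v.
Proof. by rewrite /norm2sq mulr_sumr; apply: eq_bigr => i _; rewrite mxE exprMn. Qed.

Lemma norm2Z a v : norm2 (a *: v) = `|a| * norm2 v.
Proof. by rewrite /norm2 norm2sqZ sqrtrM ?sqr_ge0 // sqrtr_sqr. Qed.

Lemma sqr_dot_le u v :
  (\sum_i u 0 i * v 0 i) ^+ 2 <= norm2sq u * norm2sq v.
Proof.
pose a i := u 0 i; pose b i := v 0 i.
have sum_mul (c e : 'I_n -> R) :
    \sum_i \sum_j c i * e j = (\sum_i c i) * (\sum_j e j).
  by rewrite mulr_suml; apply: eq_bigr => i _; rewrite mulr_sumr.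
have lagrange : \sum_i \sum_j (a i * b j - a j * b i) ^+ 2 =
    \sum_i \sum_j a i ^+ 2 * b j ^+ 2 + \sum_i \sum_j b i ^+ 2 * a j ^+ 2
    - 2 * \sum_i \sum_j (a i * b i) * (a j * b j).
  rewrite -big_split /= mulr_sumr -sumrB; apply: eq_bigr => i _.
  by rewrite -big_split /= mulr_sumr -sumrB; apply: eq_bigr => j _; ring.
have : 0 <= \sum_i \sum_j (a i * b j - a j * b i) ^+ 2.
  by apply: sumr_ge0 => i _; apply: sumr_ge0 => j _; exact: sqr_ge0.
rewrite lagrange !sum_mul -/(norm2sq u) -/(norm2sq v) expr2.
set c := \sum_i _; lra.
Qed.

Lemma dot_le_norm2 u v : \sum_i u 0 i * v 0 i <= norm2 u * norm2 v.
Proof.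
rewrite -sqrtrM ?norm2sq_ge0 //; apply: le_trans (ler_norm _) _.
by rewrite -sqrtr_sqr ler_sqrt ?sqr_dot_le // mulr_ge0 ?norm2sq_ge0.
Qed.

Lemma derive_gradE f y h : differentiable f y ->
  'D_h f y = \sum_i grad f y 0 i * h 0 i.
Proof.
move=> df; rewrite deriveE // {1}(row_sum_delta h) linear_sum.
by apply: eq_bigr => i _; rewrite linearZ /= /grad mxE deriveE // mulrC.
Qed.

Lemma is_derive_line f x h t : differentiable f (x + t *: h) ->
  is_derive t 1 (fun s : R => f (x + s *: h)) ('D_h f (x + t *: h)).
Proof.
move=> df.
(* The difference quotients of [s |-> f (x + s h)] at [t] are those of [f] at
   [x + t h] in the direction [h]. *)
have quotE : (fun s : R => s^-1 *: (((fun s : R => f (x + s *: h)) \o shift t) (s *: 1)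
            - f (x + t *: h))) =
         (fun s : R => s^-1 *: ((f \o shift (x + t *: h)) (s *: h) - f (x + t *: h))).
  apply/funext => s /=; congr (_ *: (f _ - _)).
  by rewrite [s *: 1]mulr1 scalerDl addrCA.
have dv : derivable (fun s : R => f (x + s *: h)) t 1.
  by rewrite /derivable quotE; exact: diff_derivable.
by apply: DeriveDef => //; rewrite /derive quotE.
Qed.

Context {f : 'rV[R]_n -> R} {L : R}.
Hypotheses (df : forall x, differentiable f x) (lipf : lipschitz_grad f L).

(* Mean value theorem on [0, 1] for phi t = f (x + t h) - t <grad f x, h> - t^2 L |h|^2 / 2,
   whose derivative is <= 0 by Cauchy-Schwarz and the Lipschitz bound on grad f. *)
Lemma lipschitz_grad_upper_bound x h :
  f (x + h) <= f x + \sum_i grad f x 0 i * h 0 i + L / 2 * norm2sq h.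
Proof.
set c := \sum_i _ ; set k := L / 2 * norm2sq h.
pose phi : R -> R := (fun s => f (x + s *: h)) - c \*: id - k \*: (id * id).
pose dphi t := 'D_h f (x + t *: h) - c * 1 - k * (t * 1 + t * 1).
have der t : is_derive t (1 : R) phi (dphi t).
  by apply: is_deriveB; first apply: is_deriveB; exact: is_derive_line.
have cphi : {within `[0, 1], continuous phi}.
  apply: continuous_subspaceT => t; apply: differentiable_continuous.
  by apply/derivable1_diffP; case: (der t).
have [t0 t0_01 mvt] := MVT_segment ler01 (fun t _ => der t) cphi.
have t0_ge0 : 0 <= t0 by move: t0_01; rewrite in_itv /= => /andP[].
have dphi_le0 : dphi t0 <= 0.
  rewrite /dphi derive_gradE // !mulr1.
  have -> : \sum_i grad f (x + t0 *: h) 0 i * h 0 i - c =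
      \sum_i (grad f (x + t0 *: h) - grad f x) 0 i * h 0 i.
    by rewrite /c -sumrB; apply: eq_bigr => i _; rewrite !mxE mulrBl.
  have lip_t0 := lipf (x + t0 *: h) x.
  rewrite addrAC subrr add0r norm2Z ger0_norm // in lip_t0.
  have := le_trans (dot_le_norm2 _ _) (ler_wpM2r (sqrtr_ge0 (norm2sq h)) lip_t0).
  by rewrite -/(norm2 h) /k -sqr_norm2 expr2; lra.
have phi1 : phi 1 = f (x + h) - c - k.
  by change (f (x + 1 *: h) - c * 1 - k * (1 * 1) = f (x + h) - c - k); rewrite scale1r !mulr1.
have phi0 : phi 0 = f x.
  by change (f (x + 0 *: h) - c * 0 - k * (0 * 0) = f x); rewrite scale0r addr0 !mulr0 !subr0.
by move: mvt dphi_le0; rewrite phi1 phi0 subr0 mulr1 => <-; lra.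
Qed.

Lemma lipschitz_grad_step_bound x a v :
  f (x - a *: v) <= f x - a * \sum_i grad f x 0 i * v 0 i + L / 2 * (a ^+ 2 * norm2sq v).
Proof.
have := lipschitz_grad_upper_bound x (- a *: v).
rewrite norm2sqZ sqrrN scaleNr mulr_sumr -sumrN.
suff -> : \sum_i grad f x 0 i * (- (a *: v)) 0 i = \sum_i - (a * (grad f x 0 i * v 0 i)) by [].
(* Generalizing [grad f x] keeps [mxE] from unfolding it. *)
by move: (grad f x) => g; apply: eq_bigr => i _; rewrite !mxE mulrN mulrCA.
Qed.

End LipschitzGradient.

Section FiniteMeasureIntegrals.
Context {d} {T : measurableType d} {R : realType} (P : probability T R).
Implicit Types (A : set T) (h : T -> R).

Lemma measurable_bool_set (c : T -> bool) : measurable_fun setT c ->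
  measurable [set w | c w].
Proof. by move=> mc; rewrite -[X in measurable X]setTI; exact: mc. Qed.

Lemma measurable_fun_natr (c : T -> bool) : measurable_fun setT c ->
  measurable_fun setT (fun w => (c w)%:R : R).
Proof.
move=> mc; have -> : (fun w => (c w)%:R : R) = \1_[set w | c w].
  by apply/funext => w; rewrite indicE; case: (boolP (c w)) => [cw | /negP cw];
    [rewrite mem_set | rewrite memNset].
by apply: measurable_indic; exact: measurable_bool_set.
Qed.

Lemma measurable_fun_sgr h : measurable_fun setT h ->
  measurable_fun setT (fun w => Num.sg (h w)).
Proof.
move=> mh; have -> : (fun w => Num.sg (h w)) = fun w => (0 < h w)%R%:R - (h w < 0)%R%:R.
  by apply/funext => w; case: sgrP; rewrite ?subr0 ?sub0r.
by apply: measurable_funB; apply: measurable_fun_natr; exact: measurable_fun_ltr.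
Qed.

Lemma bounded_integrable {A h M} : measurable A -> measurable_fun setT h ->
  (forall w, A w -> `|h w| <= M) -> P.-integrable A (EFin \o h).
Proof.
move=> mA mh hM; apply: measurable_bounded_integrable => //.
- exact: le_lt_trans (probability_le1 P mA) (ltey _).
- exact: measurable_funTS.
exists M; split; first exact: num_real.
by move=> N MN w Aw; apply: le_trans (hM w Aw) (ltW MN).
Qed.

Lemma integrableZl_EFin A c h : measurable A -> P.-integrable A (EFin \o h) ->
  P.-integrable A (EFin \o (fun w => c * h w)).
Proof.
move=> mA ih; have := integrableZl mA c ih.
by apply: eq_integrable => // w _ /=; rewrite EFinM.
Qed.

Lemma integrableD_EFin A h1 h2 : measurable A ->
  P.-integrable A (EFin \o h1) -> P.-integrable A (EFin \o h2) ->
  P.-integrable A (EFin \o (fun w => h1 w + h2 w)).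
Proof.
move=> mA ih1 ih2; have := integrableD mA ih1 ih2.
by apply: eq_integrable => // w _ /=; rewrite EFinD.
Qed.

Lemma integrable_sumr A I (r : seq I) (h : I -> T -> R) : measurable A ->
  (forall i, P.-integrable A (EFin \o h i)) ->
  P.-integrable A (EFin \o (fun w => \sum_(i <- r) h i w)).
Proof.
move=> mA hi; have -> : EFin \o (fun w => \sum_(i <- r) h i w) =
    (fun w => \sum_(i <- r) (EFin \o h i) w)%E.
  by apply/funext => w /=; rewrite sumEFin.
exact: integrable_sum.
Qed.

Lemma integrable_natrM A (c : T -> bool) h M : measurable A ->
  measurable_fun setT c -> measurable_fun setT h -> (forall w, A w -> `|h w| <= M) ->
  P.-integrable A (EFin \o (fun w => (c w)%:R * h w)).
Proof.
move=> mA mc mh hM; apply: (@bounded_integrable _ _ M) => // [|w Aw].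
  by apply: measurable_funM => //; exact: measurable_fun_natr.
rewrite normrM; apply: le_trans (hM w Aw); rewrite ler_piMl //.
by case: (c w); rewrite ?normr1 ?normr0.
Qed.

Lemma integrable_finite_comp A (K : finType) (k : T -> K) (F : K -> R) :
  measurable A -> (forall c, measurable (k @^-1` [set c])) ->
  P.-integrable A (EFin \o (F \o k)).
Proof.
move=> mA mk; apply: (@bounded_integrable _ _ (\sum_c `|F c|)) => // [|w _].
  have -> : F \o k = fun w => \sum_c F c * \1_(k @^-1` [set c]) w.
    apply/funext => w /=; rewrite (bigD1 (k w)) //= indicE mem_set // mulr1.
    rewrite big1 ?addr0 // => c /negbTE kc; rewrite indicE memNset ?mulr0 //=.
    by move/eqP; rewrite eq_sym kc.
  by apply: measurable_sum => c; apply: measurable_funM => //; exact: measurable_indic.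
by rewrite (bigD1 (k w)) //= lerDl sumr_ge0.
Qed.

(* No measurability of [Phi] is needed: the integrand factors through the finite
   type [{ffun 'I_n -> seq_sub r}]. *)
Lemma integrable_row_finite {A n} {r : seq R} {s : 'I_n -> T -> R} (Phi : 'rV[R]_n -> R) :
  measurable A -> (forall i, measurable_fun setT (s i)) -> (forall i w, s i w \in r) ->
  P.-integrable A (EFin \o (fun w => Phi (\row_i s i w))).
Proof.
move=> mA ms sr.
pose k w : {ffun 'I_n -> seq_sub r} := [ffun i => SeqSub (sr i w)].
have -> : (fun w => Phi (\row_i s i w)) = (fun c => Phi (\row_i ssval (c i))) \o k.
  by apply/funext => w /=; congr Phi; apply/matrixP => i j; rewrite !mxE ffunE.
apply: (@integrable_finite_comp A _ k (fun c => Phi (\row_i ssval (c i)))) => // c.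
have -> : k @^-1` [set c] = \bigcap_(i in [set: 'I_n]) (s i @^-1` [set ssval (c i)]).
  apply/seteqP; split => [w /= <- i _ | w /= sc]; first by rewrite ffunE.
  by apply/ffunP => i; apply: val_inj; rewrite ffunE /=; exact: sc.
apply: fin_bigcap_measurable => [|i _]; first exact: finite_finset.
by rewrite -[X in measurable X]setTI; exact: ms.
Qed.

Lemma Rintegral_sum A I (r : seq I) (h : I -> T -> R) : measurable A ->
  (forall i, P.-integrable A (EFin \o h i)) ->
  \int[P]_(w in A) (\sum_(i <- r) h i w) = \sum_(i <- r) \int[P]_(w in A) h i w.
Proof.
move=> mA hi; elim: r => [|j r IH].
  by under eq_Rintegral do rewrite big_nil; rewrite big_nil Rintegral_cst // mul0r.
under eq_Rintegral do rewrite big_cons.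
by rewrite big_cons RintegralD ?IH //; exact: integrable_sumr.
Qed.

Lemma Rintegral_natr A (b : T -> bool) : measurable A -> measurable [set w | b w] ->
  \int[P]_(w in A) (b w)%:R = fine (P (A `&` [set w | b w])).
Proof.
move=> mA mb; rewrite setIC -integral_indic //; congr fine; apply: eq_integral => w _.
by rewrite indicE; case: (boolP (b w)) => [bw | /negP bw]; [rewrite mem_set | rewrite memNset].
Qed.

Lemma Rintegral_natrM A (c : T -> bool) h :
  \int[P]_(w in A) ((c w)%:R * h w) = \int[P]_(w in A `&` [set w | c w]) h w.
Proof.
rewrite Rintegral_mkcondr; apply: eq_Rintegral => w _; rewrite patchE.
by case: (boolP (c w)) => [cw | /negP cw]; [rewrite mem_set ?mul1r | rewrite memNset ?mul0r].
Qed.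

End FiniteMeasureIntegrals.

Section ConditionalExpectation.
Context {d} {T : measurableType d} {R : realType} {P : probability T R} {A : set T}.
Hypotheses (mA : measurable A) (PA_gt0 : (0 < P A)%E).
Implicit Types Z : T -> R.

Let PA_fine_gt0 : 0 < fine (P A).
Proof. by rewrite fine_gt0 // PA_gt0 (le_lt_trans (probability_le1 P mA) (ltey _)). Qed.

Lemma eq_condE {Z1 Z2} : {in A, Z1 =1 Z2} -> condE P A Z1 = condE P A Z2.
Proof. by move=> Z12; rewrite /condE (eq_Rintegral _ Z12). Qed.

Lemma condE_cst c : condE P A (fun=> c) = c.
Proof. by rewrite /condE Rintegral_cst // mulfK // gt_eqF. Qed.

Lemma condED Z1 Z2 : P.-integrable A (EFin \o Z1) -> P.-integrable A (EFin \o Z2) ->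
  condE P A (fun w => Z1 w + Z2 w) = condE P A Z1 + condE P A Z2.
Proof. by move=> iZ1 iZ2; rewrite /condE RintegralD // mulrDl. Qed.

Lemma condEZl c Z : P.-integrable A (EFin \o Z) ->
  condE P A (fun w => c * Z w) = c * condE P A Z.
Proof. by move=> iZ; rewrite /condE RintegralZl // mulrA. Qed.

Lemma condE_sum I (r : seq I) (Z : I -> T -> R) :
  (forall i, P.-integrable A (EFin \o Z i)) ->
  condE P A (fun w => \sum_(i <- r) Z i w) = \sum_(i <- r) condE P A (Z i).
Proof. by move=> iZ; rewrite /condE Rintegral_sum // mulr_suml. Qed.

Lemma ler_condE {Z1 Z2} : P.-integrable A (EFin \o Z1) -> P.-integrable A (EFin \o Z2) ->
  (forall w, A w -> Z1 w <= Z2 w) -> condE P A Z1 <= condE P A Z2.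
Proof.
by move=> iZ1 iZ2 Z12; rewrite /condE ler_pM2r ?invr_gt0 //; exact: le_Rintegral.
Qed.

End ConditionalExpectation.

Section SignedBernoulli.
Context {d} {T : measurableType d} {R : realType} (P : probability T R).
Context (F : set (set T)) {A : set T} {eta : R} {g : T -> R} {b : T -> bool}.
Hypotheses (mA : measurable A) (eta_gt0 : 0 < eta).
Hypotheses (mg : measurable_fun setT g) (mb : measurable_fun setT b).
Hypothesis g_le_eta : forall w, A w -> `|g w| <= eta.
(* P[b | F] = min (|g| / eta) 1, stated on the sets of the family F. *)
Hypothesis b_bernoulli : forall S, F S ->
  P (S `&` [set w | b w]) = (\int[P]_(w in S) (Num.min (`|g w| / eta) 1)%:E)%E.
Hypotheses (F_pos : F (A `&` [set w | 0 < g w])) (F_neg : F (A `&` [set w | g w < 0])).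

Let mApos : measurable (A `&` [set w | 0 < g w]).
Proof. by apply: measurableI => //; apply: measurable_bool_set; exact: measurable_fun_ltr. Qed.

Let mAneg : measurable (A `&` [set w | g w < 0]).
Proof. by apply: measurableI => //; apply: measurable_bool_set; exact: measurable_fun_ltr. Qed.

Let Rintegral_bernoulli_sign S : F S -> measurable S -> S `<=` A ->
  \int[P]_(w in S) (b w)%:R = \int[P]_(w in S) `|g w| / eta.
Proof.
move=> FS mS SA; rewrite Rintegral_natr //; last exact: measurable_bool_set.
rewrite b_bernoulli // -RintegralZr //; last first.
  apply: (@bounded_integrable _ _ _ P _ _ eta) => // [|w /SA/g_le_eta]; last by rewrite normr_id.
  by apply: measurableT_comp => //; exact: normr_measurable.
congr fine; apply: eq_integral => w /[!inE] /SA/g_le_eta gw.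
by rewrite min_l // ler_pdivrMr // mul1r.
Qed.

Let mpos : measurable_fun setT (fun w => 0 < g w).
Proof. exact: measurable_fun_ltr. Qed.

Let mneg : measurable_fun setT (fun w => g w < 0).
Proof. exact: measurable_fun_ltr. Qed.

Let Rintegral_sgrM {h : T -> R} {M : R} :
  measurable_fun setT h -> (forall w, A w -> `|h w| <= M) ->
  \int[P]_(w in A) (Num.sg (g w) * h w) =
  \int[P]_(w in A `&` [set w | 0 < g w]) h w - \int[P]_(w in A `&` [set w | g w < 0]) h w.
Proof.
move=> mh hM; rewrite -!Rintegral_natrM -RintegralB //; try exact: integrable_natrM mh hM.
by apply: eq_Rintegral => w _; case: sgrP; rewrite ?mul0r ?mul1r ?subr0 ?sub0r ?mulN1r.
Qed.

Let Rintegral_sqr_sgrM {h : T -> R} {M : R} :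
  measurable_fun setT h -> (forall w, A w -> `|h w| <= M) ->
  \int[P]_(w in A) (Num.sg (g w) ^+ 2 * h w) =
  \int[P]_(w in A `&` [set w | 0 < g w]) h w + \int[P]_(w in A `&` [set w | g w < 0]) h w.
Proof.
move=> mh hM; rewrite -!Rintegral_natrM -RintegralD //; try exact: integrable_natrM mh hM.
by apply: eq_Rintegral => w _; rewrite sqr_sg; case: sgrP; rewrite ?mul0r ?mul1r ?addr0 ?add0r.
Qed.

Let mnormg : measurable_fun setT (fun w => `|g w|).
Proof. by apply: measurableT_comp => //; exact: normr_measurable. Qed.

Let mbR : measurable_fun setT (fun w => (b w)%:R : R).
Proof. exact: measurable_fun_natr. Qed.

Let b_le1 w : A w -> `|(b w)%:R : R| <= 1.
Proof. by case: (b w); rewrite ?normr1 ?normr0. Qed.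

Let normg_le_eta w : A w -> `| `|g w| | <= eta.
Proof. by rewrite normr_id; exact: g_le_eta. Qed.

Lemma condE_sgr_bernoulli :
  condE P A (fun w => Num.sg (g w) * (b w)%:R) = condE P A g / eta.
Proof.
rewrite /condE mulrAC; congr (_ / _).
rewrite (Rintegral_sgrM mbR b_le1) !Rintegral_bernoulli_sign //; try exact: subIsetl.
rewrite -mulrBl -(Rintegral_sgrM mnormg normg_le_eta).
by under eq_Rintegral do rewrite mulr_sg_norm.
Qed.

Lemma condE_sqr_sgr_bernoulli :
  condE P A (fun w => (Num.sg (g w) * (b w)%:R) ^+ 2) = condE P A (fun w => `|g w|) / eta.
Proof.
rewrite /condE mulrAC; congr (_ / _).
have b_sqr w : ((b w)%:R : R) ^+ 2 = (b w)%:R by case: (b w); rewrite ?expr1n ?expr0n.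
under eq_Rintegral do rewrite exprMn b_sqr.
rewrite (Rintegral_sqr_sgrM mbR b_le1) !Rintegral_bernoulli_sign //; try exact: subIsetl.
rewrite -mulrDl -(Rintegral_sqr_sgrM mnormg normg_le_eta).
congr (_ / _); apply: eq_Rintegral => w _; rewrite sqr_sg.
by case: (eqVneq (g w) 0) => [->|]; rewrite ?normr0 ?mulr0 ?mul1r.
Qed.

End SignedBernoulli.

Section GeneratedSigmaAlgebra.
Context {R : realType} {n : nat} {d} {T : measurableType d} {X Y : T -> 'rV[R]_n}.

Lemma sigma2_setI A B : sigma2 X Y A -> sigma2 X Y B -> sigma2 X Y (A `&` B).
Proof. exact: (@measurableI _ (g_sigma_algebraType (gen2 X Y))). Qed.

Lemma sigma2_preimage_fst i (B : set R) : measurable B ->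
  sigma2 X Y ((fun w => X w 0 i) @^-1` B).
Proof. by move=> mB; apply: sub_sigma_algebra; exists i, B; split => //; left. Qed.

Lemma sigma2_preimage_snd i (B : set R) : measurable B ->
  sigma2 X Y ((fun w => Y w 0 i) @^-1` B).
Proof. by move=> mB; apply: sub_sigma_algebra; exists i, B; split => //; right. Qed.

Lemma sigma2_measurable {A : set T} : rvec_measurable X -> rvec_measurable Y ->
  sigma2 X Y A -> measurable A.
Proof.
move=> mX mY; apply: smallest_sub A; first exact: sigma_algebra_measurable.
by move=> _ [i [B [mB [->|->]]]]; rewrite -[X in measurable X]setTI; [exact: mX | exact: mY].
Qed.

Lemma sigma2_level_Eevent x eta : sigma2 X Y ([set w | X w = x] `&` Eevent eta Y).
Proof.
have -> : [set w | X w = x] `&` Eevent eta Y = \bigcap_(i in [set: 'I_n])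
    ((fun w => X w 0 i) @^-1` [set x 0 i] `&` (fun w => Y w 0 i) @^-1` `[- eta, eta]).
  apply/seteqP; split => [w [/= Xw Yw] i _ | w XY].
    by split; rewrite /= ?Xw // in_itv /= -ler_norml.
  split; first by apply/rowP => i; have [] := XY i I.
  by move=> i; have [_] := XY i I; rewrite /= in_itv /= -ler_norml.
apply: (@fin_bigcap_measurable _ (g_sigma_algebraType (gen2 X Y))) => [|i _].
  exact: finite_finset.
apply: sigma2_setI; [apply: sigma2_preimage_fst | apply: sigma2_preimage_snd].
- exact: measurable_set1.
- exact: measurable_itv.
Qed.

End GeneratedSigmaAlgebra.

Lemma smgd_stepE (R : realType) n (alpha : R) (x g : 'rV[R]_n) (D : 'I_n -> bool) :
  smgd_step alpha x g D = x - alpha *: \row_i (Num.sg (g 0 i) * (D i)%:R).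
Proof. by apply/rowP => i; rewrite !mxE mulrA. Qed.

Section SMGDStep.
Context {R : realType} {n : nat} {d} {T : measurableType d} (P : probability T R).
Context (f : 'rV[R]_n -> R) (L alpha eta : R).
Context (xt G : T -> 'rV[R]_n) (D : T -> 'I_n -> bool) (x : 'rV[R]_n).
Hypotheses (df : forall y, differentiable f y) (lipf : lipschitz_grad f L).
Hypothesis eta_gt0 : 0 < eta.
Hypotheses (mxt : rvec_measurable xt) (mG : rvec_measurable G).
Hypothesis mD : forall i, measurable_fun setT (fun w => D w i).
Hypothesis bernoulli : forall i A, sigma2 xt G A ->
  P (A `&` [set w | D w i]) = (\int[P]_(w in A) (Num.min (`|G w 0 i| / eta) 1)%:E)%E.

Let A := [set w | xt w = x] `&` Eevent eta G.
Hypothesis PA_gt0 : (0 < P A)%E.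
Hypothesis unbiased : forall i, condE P A (fun w => G w 0 i) = grad f x 0 i.

Let sigA : sigma2 xt G A. Proof. exact: sigma2_level_Eevent. Qed.

Let mA : measurable A. Proof. exact: sigma2_measurable sigA. Qed.

Let G_le_eta i w : A w -> `|G w 0 i| <= eta. Proof. by case=> _ /(_ i). Qed.

Let s i w := Num.sg (G w 0 i) * (D w i)%:R.

Let ms i : measurable_fun setT (s i).
Proof. by apply: measurable_funM; [exact: measurable_fun_sgr | exact: measurable_fun_natr]. Qed.

Let s_values i w : s i w \in [:: -1; 0; 1].
Proof.
by rewrite /s !inE; case: sgrP => _; case: (D w i);
  rewrite ?mul1r ?mul0r ?mulr1 ?mulr0 ?eqxx ?orbT.
Qed.

Let s_le1 i w : `|s i w| <= 1.
Proof.
by move: (s_values i w); rewrite !inE => /or3P[] /eqP ->; rewrite ?normrN ?normr1 ?normr0.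
Qed.

Let sigA_pos i : sigma2 xt G (A `&` [set w | 0 < G w 0 i]).
Proof.
apply: sigma2_setI => //; apply: (sigma2_preimage_snd i [set r : R | 0 < r]).
by apply: measurable_bool_set; exact: measurable_fun_ltr.
Qed.

Let sigA_neg i : sigma2 xt G (A `&` [set w | G w 0 i < 0]).
Proof.
apply: sigma2_setI => //; apply: (sigma2_preimage_snd i [set r : R | r < 0]).
by apply: measurable_bool_set; exact: measurable_fun_ltr.
Qed.

Let condE_s i : condE P A (s i) = grad f x 0 i / eta.
Proof.
by rewrite (condE_sgr_bernoulli P (sigma2 xt G) mA eta_gt0 (mG i) (mD i) (G_le_eta i)
  (bernoulli i) (sigA_pos i) (sigA_neg i)) unbiased.
Qed.

Let condE_s2 i : condE P A (fun w => s i w ^+ 2) = condE P A (fun w => `|G w 0 i|) / eta.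
Proof.
exact: (condE_sqr_sgr_bernoulli P (sigma2 xt G) mA eta_gt0 (mG i) (mD i) (G_le_eta i)
  (bernoulli i) (sigA_pos i) (sigA_neg i)).
Qed.

Let lin w := \sum_i grad f x 0 i * s i w.
Let quad w := \sum_i s i w ^+ 2.
Let H w := f x + - alpha * lin w + L / 2 * (alpha ^+ 2 * quad w).

Let descent w : f (x - alpha *: \row_i s i w) <= H w.
Proof.
rewrite /H mulNr.
have <- : norm2sq (\row_i s i w) = quad w by apply: eq_bigr => i _; rewrite mxE.
have <- : \sum_i grad f x 0 i * (\row_i s i w) 0 i = lin w.
  by apply: eq_bigr => i _; move: (grad f x 0 i) => g; rewrite mxE.
exact: lipschitz_grad_step_bound.
Qed.

Let int_s i : P.-integrable A (EFin \o s i).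
Proof. by apply: (bounded_integrable P mA (ms i)) => w _; exact: s_le1. Qed.

Let int_lin : P.-integrable A (EFin \o lin).
Proof. by apply: integrable_sumr => // i; exact: integrableZl_EFin (int_s i). Qed.

Let int_s2 i : P.-integrable A (EFin \o (fun w => s i w ^+ 2)).
Proof.
apply: (bounded_integrable P mA (measurable_funX 2 (ms i))) => w _.
by rewrite normrX; exact: exprn_ile1 (normr_ge0 _) (s_le1 i w).
Qed.

Let int_quad : P.-integrable A (EFin \o quad).
Proof. exact: integrable_sumr. Qed.

Let int_cst : P.-integrable A (EFin \o (fun=> f x)).
Proof. exact: finite_measure_integrable_cst. Qed.

Let int_neglin : P.-integrable A (EFin \o (fun w => - alpha * lin w)).
Proof. exact: integrableZl_EFin. Qed.

Let int_quad2 : P.-integrable A (EFin \o (fun w => alpha ^+ 2 * quad w)).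
Proof. exact: integrableZl_EFin. Qed.

Let int_H1 : P.-integrable A (EFin \o (fun w => f x + - alpha * lin w)).
Proof. exact: integrableD_EFin. Qed.

Let int_H2 : P.-integrable A (EFin \o (fun w => L / 2 * (alpha ^+ 2 * quad w))).
Proof. exact: integrableZl_EFin. Qed.

Let int_H : P.-integrable A (EFin \o H).
Proof. exact: integrableD_EFin. Qed.

Let condE_H : condE P A H = f x + L * alpha ^+ 2 / (2 * eta) *
  condE P A (fun w => norm1 (G w)) - alpha / eta * norm2sq (grad f x).
Proof.
have int_normG i : P.-integrable A (EFin \o (fun w => `|G w 0 i|)).
  apply: (bounded_integrable P mA) => [|w Aw]; last by rewrite normr_id; exact: G_le_eta.
  by apply: measurableT_comp => //; exact: normr_measurable.
have condE_lin : condE P A lin = (\sum_i grad f x 0 i ^+ 2) / eta.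
  rewrite condE_sum // => [|i]; last exact: integrableZl_EFin.
  by rewrite mulr_suml; apply: eq_bigr => i _; rewrite condEZl // condE_s mulrA -expr2.
have condE_quad : condE P A quad = (\sum_i condE P A (fun w => `|G w 0 i|)) / eta.
  by rewrite (condE_sum mA _ _ _ int_s2) mulr_suml; apply: eq_bigr => i _; exact: condE_s2.
rewrite (condED mA _ _ int_H1 int_H2) (condED mA _ _ int_cst int_neglin) condE_cst //.
rewrite (condEZl mA _ _ int_lin) (condEZl mA _ _ int_quad2) (condEZl mA _ _ int_quad).
rewrite condE_lin condE_quad /norm1 (condE_sum mA _ _ _ int_normG) /norm2sq.
by field; rewrite gt_eqF.
Qed.

Lemma smgd_step_expected_descent :
  condE P A (fun w => f (smgd_step alpha (xt w) (G w) (D w))) <=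
  f x + L * alpha ^+ 2 / (2 * eta) * condE P A (fun w => norm1 (G w))
    - alpha / eta * norm2sq (grad f x).
Proof.
have stepE : {in A, (fun w => f (smgd_step alpha (xt w) (G w) (D w))) =1
    (fun w => f (x - alpha *: \row_i s i w))}.
  by move=> w /[!inE] -[/= -> _]; rewrite smgd_stepE.
have int_F : P.-integrable A (EFin \o (fun w => f (x - alpha *: \row_i s i w))).
  exact: (integrable_row_finite P (fun v => f (x - alpha *: v)) mA ms s_values).
rewrite (eq_condE stepE) -condE_H.
by apply: (ler_condE mA PA_gt0 int_F int_H) => w _; exact: descent.
Qed.

End SMGDStep.

Theorem theorem4p1 (R : realType) (n : nat) (f : 'rV[R]_n -> R) (L alpha eta : R)
  (d : measure_display) (T : measurableType d) (P : probability T R)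
  (xt G : T -> 'rV[R]_n) (D : T -> 'I_n -> bool) :
  (forall x, differentiable f x) ->
  lipschitz_grad f L ->
  0 < alpha -> 0 < eta ->
  rvec_measurable xt -> rvec_measurable G ->
  (forall i, measurable_fun setT (fun w => D w i)) ->
  (* x^t lies on the lattice alpha Z^n *)
  (forall w, in_lattice alpha (xt w)) ->
  (* unbiasedness on E^t: E[G^t(x^t) | x^t, E^t] = grad f (x^t) *)
  (forall x, (0 < P ([set w | xt w = x] `&` Eevent eta G))%E ->
     forall i, condE P ([set w | xt w = x] `&` Eevent eta G) (fun w => G w 0 i)
               = grad f x 0 i) ->
  (* P[Delta_i = 1 | G^t, x^t] = min(|G^t(x^t)_i| / eta, 1) *)
  (forall i, forall A, sigma2 xt G A ->
     P (A `&` [set w | D w i]) =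
     (\int[P]_(w in A) (Num.min (`|G w 0 i| / eta) 1)%:E)%E) ->
  forall x, (0 < P ([set w | xt w = x] `&` Eevent eta G))%E ->
    condE P ([set w | xt w = x] `&` Eevent eta G)
          (fun w => f (smgd_step alpha (xt w) (G w) (D w)))
    <= f x + L * alpha ^+ 2 / (2 * eta) *
             condE P ([set w | xt w = x] `&` Eevent eta G) (fun w => norm1 (G w))
           - alpha / eta * norm2sq (grad f x).
Proof.
move=> df lipf _ eta_gt0 mxt mG mD _ unbiased bernoulli x PA_gt0.
exact: smgd_step_expected_descent (unbiased x PA_gt0).
Qed.
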